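(* The function $\mathrm{Eci}(x,\lambda)=\int_0^x \frac{e^{it\lambda}}{\cos t}\,dt$ satisfies \[ \mathrm{Eci}(x,\lambda)=e^{ix\lambda}\,\mathrm{L}\left(x-\frac{\pi}{2},\lambda\right)+i\,\mathrm{S}_{\pi/2}(\lambda), \] and admits the Laplace transform representation \[ \mathrm{Eci}(y,\lambda)=i\int_0^\infty e^{-\lambda u}\left(\frac{1}{\cosh u}-\frac{e^{i\lambda y}}{\cosh(u-iy)}\right)du. \]
   Context: Here $0<x,y<\pi/2$ and $\lambda$ is a real parameter (with $\lambda>-1$ for the Laplace integrals). $L(x,\mu)=\sum_{k=1}^\infty \frac{e^{ikx}}{k+\mu}$ and $\mathrm{L}(x,\lambda)=e^{-ix}L\left(2x,\frac{\lambda-1}{2}\right)=2\sum_{k=1}^\infty\frac{e^{(2k-1)ix}}{2k-1+\lambda}$, which has the representation $\mathrm{L}(x,\lambda)=\int_0^\infty\frac{e^{-\lambda u}du}{\sinh(u-ix)}$. The special value $\mathrm{S}_{\pi/2}(\lambda)=2\sum_{k=1}^\infty \frac{(-1)^{k-1}}{2k-1+\lambda}=\int_0^\infty\frac{e^{-\lambda u}}{\cosh u}du$. *)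

From Stdlib Require Import Reals.
From Coquelicot Require Export Coquelicot.
Open Scope R_scope.

Definition cexp (z : C) : C := (RtoC (exp (Re z)) * (cos (Im z), sin (Im z)))%C.
Definition ccosh (z : C) : C := ((cexp z + cexp (- z)) / RtoC 2)%C.

Definition Eci (x lam : R) : C :=
  RInt (V := C_R_CompleteNormedModule)
       (fun t => (cexp (Ci * RtoC (t * lam)) / RtoC (cos t))%C) 0 x.

(* general term of  L(x,λ) = 2 Σ_{k>=1} e^{(2k-1) i x}/(2k-1+λ)  (index n = k-1) *)
Definition L_term (x lam : R) (n : nat) : C :=
  (RtoC 2 * cexp (Ci * RtoC ((2 * INR n + 1) * x)) / RtoC (2 * INR n + 1 + lam))%C.

(* "L(x,λ) = v": the series defining L(x,λ) converges (partial sums) to v *)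
Definition is_Lval (x lam : R) (v : C) : Prop :=
  is_series (K := C_AbsRing) (V := C_NormedModule) (L_term x lam) v.

(* general term of  S_{π/2}(λ) = 2 Σ_{k>=1} (-1)^{k-1}/(2k-1+λ) *)
Definition S_term (lam : R) (n : nat) : R := 2 * (-1) ^ n / (2 * INR n + 1 + lam).

Definition is_Sval (lam : R) (s : R) : Prop := is_series (S_term lam) s.

(* Split [Eci x mu] into the phase integrals [Eph th x mu] of [cos (t mu - th) / cos t].
   Since [cos (A - t) + cos (A + t) = 2 cos A cos t], the integrals at [mu] and [mu + 2] add up
   to an elementary function, while integration by parts gives [mu Eph = O(1)].  Telescoping with
   alternating signs therefore expands [Eci x lam] as the series of
   [2 i (-1)^n (1 - e^{i a_n x}) / a_n], [a_n = 2n + 1 + lam], and rotating this series by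
   [e^{-i x lam}] separates it into [L (x - pi/2, lam)] and [i S_{pi/2} (lam)].
   For the Laplace form, [1 / cosh (u - i y)] is a geometric series in [e^{-2 (u - i y)}]: its
   [n]-th term integrates over [0, +oo) to the [n]-th term of the same series, and the remainder
   after [N] terms has integral [O (1 / a_N)] uniformly in the upper bound of integration. *)

From Stdlib Require Import Reals Lra.
From Coquelicot Require Import Coquelicot.
Open Scope R_scope.

Lemma cexp_Ci_mult (a : R) : cexp (Ci * RtoC a) = (cos a, sin a).
Proof.
  unfold cexp, Ci, RtoC, Cmult; simpl.
  replace (0 * a - 1 * 0) with 0 by ring; replace (0 * 0 + 1 * a) with a by ring.
  rewrite exp_0; f_equal; ring.
Qed.

Lemma Cmod_cos_sin (a : R) : Cmod (cos a, sin a) = 1.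
Proof.
  unfold Cmod; simpl; rewrite !Rmult_1_r, Rplus_comm, <- sqrt_1.
  f_equal; apply sin2_cos2.
Qed.

Lemma Cmod_cexp (z : C) : Cmod (cexp z) = exp (Re z).
Proof.
  unfold cexp; rewrite Cmod_mult, Cmod_R, Cmod_cos_sin, Rabs_pos_eq by apply Rlt_le, exp_pos.
  ring.
Qed.

Lemma cexp_neq_0 (z : C) : cexp z <> 0%C.
Proof.
  intros E; pose proof (exp_pos (Re z)) as H.
  rewrite <- Cmod_cexp, E, Cmod_0 in H; lra.
Qed.

Lemma cexp_add (z w : C) : cexp (z + w) = (cexp z * cexp w)%C.
Proof.
  destruct z as [a b], w as [c d]; unfold cexp, Cmult, RtoC; simpl.
  rewrite exp_plus, cos_plus, sin_plus; f_equal; ring.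
Qed.

Lemma cexp_RtoC (a : R) : cexp (RtoC a) = RtoC (exp a).
Proof. unfold cexp, Cmult, RtoC; simpl; rewrite cos_0, sin_0; f_equal; ring. Qed.

Lemma ccosh_RtoC (a : R) : ccosh (RtoC a) = RtoC (cosh a).
Proof.
  unfold ccosh, cosh; rewrite <- RtoC_opp, !cexp_RtoC, <- RtoC_plus, <- RtoC_div by lra.
  reflexivity.
Qed.

(** * The series for [Eci] *)

Definition Eph (th x mu : R) : R := RInt (fun t => cos (t * mu - th) / cos t) 0 x.

Lemma ex_RInt_Eph (th x mu : R) : 0 < x < PI / 2 ->
  ex_RInt (fun t => cos (t * mu - th) / cos t) 0 x.
Proof.
  intros Hx; apply (ex_RInt_continuous (V := R_CompleteNormedModule)); intros t Ht.
  rewrite Rmin_left, Rmax_right in Ht by lra.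
  assert (0 < cos t) by (apply cos_gt_0; lra).
  apply (ex_derive_continuous (V := R_NormedModule)); auto_derive; lra.
Qed.

Lemma Eci_eq_Eph (x mu : R) : 0 < x < PI / 2 -> Eci x mu = (Eph 0 x mu, Eph (PI / 2) x mu).
Proof.
  intros Hx; unfold Eci, Eph.
  rewrite (RInt_ext (V := C_R_CompleteNormedModule) _
             (fun t => (cos (t * mu - 0) / cos t, cos (t * mu - PI / 2) / cos t))).
  2:{ intros t Ht; rewrite Rmin_left, Rmax_right in Ht by lra.
      assert (0 < cos t) by (apply cos_gt_0; lra).
      rewrite cexp_Ci_mult, Rminus_0_r, cos_minus, cos_PI2, sin_PI2.
      unfold Cdiv, Cinv, Cmult, RtoC; simpl; f_equal; field; lra. }
  apply (is_RInt_unique (V := C_R_CompleteNormedModule)).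
  apply (is_RInt_fct_extend_pair (U := R_NormedModule) (V := R_NormedModule));
    apply (RInt_correct (V := R_CompleteNormedModule)), ex_RInt_Eph; exact Hx.
Qed.

Lemma Eph_add_shift2 (th x mu : R) : 0 < x < PI / 2 -> mu + 1 <> 0 ->
  Eph th x mu + Eph th x (mu + 2) = 2 * (sin ((mu + 1) * x - th) + sin th) / (mu + 1).
Proof.
  intros Hx Hmu; unfold Eph.
  rewrite <- (RInt_plus (V := R_CompleteNormedModule)) by (apply ex_RInt_Eph; exact Hx).
  rewrite (RInt_ext (V := R_CompleteNormedModule) _ (fun t => 2 * cos ((mu + 1) * t - th))).
  2:{ intros t Ht; rewrite Rmin_left, Rmax_right in Ht by lra.
      assert (0 < cos t) by (apply cos_gt_0; lra).
      replace (t * mu - th) with (((mu + 1) * t - th) - t) by ring.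
      replace (t * (mu + 2) - th) with (((mu + 1) * t - th) + t) by ring.
      unfold plus; simpl; rewrite cos_minus, cos_plus; field; lra. }
  apply (is_RInt_unique (V := R_CompleteNormedModule)).
  replace (2 * (sin ((mu + 1) * x - th) + sin th) / (mu + 1))
    with (minus (2 * sin ((mu + 1) * x - th) / (mu + 1)) (2 * sin ((mu + 1) * 0 - th) / (mu + 1)))
    by (unfold minus, plus, opp; simpl; replace ((mu + 1) * 0 - th) with (- th) by ring;
        rewrite sin_neg; field; exact Hmu).
  apply (is_RInt_derive (V := R_CompleteNormedModule)
           (fun t => 2 * sin ((mu + 1) * t - th) / (mu + 1))); intros t _.
  - auto_derive; [exact I | unfold Rminus; field; exact Hmu].
  - apply (ex_derive_continuous (V := R_NormedModule)); auto_derive; auto.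
Qed.

Lemma cos_ge_on (x t : R) : 0 < x < PI / 2 -> 0 <= t <= x -> cos x <= cos t.
Proof.
  intros Hx Ht; destruct (Req_dec t x) as [-> | Hne]; [lra |].
  apply Rlt_le, cos_decreasing_1; lra.
Qed.

Lemma ex_RInt_sin_mul_sin_div_cos2 (th x mu : R) : 0 < x < PI / 2 ->
  ex_RInt (fun t => sin (t * mu - th) * sin t / cos t ^ 2) 0 x.
Proof.
  intros Hx; apply (ex_RInt_continuous (V := R_CompleteNormedModule)); intros t Ht.
  rewrite Rmin_left, Rmax_right in Ht by lra.
  assert (0 < cos t) by (apply cos_gt_0; lra).
  apply (ex_derive_continuous (V := R_NormedModule)); auto_derive; nra.
Qed.

Lemma Rabs_RInt_sin_mul_sin_div_cos2_le (th x mu : R) : 0 < x < PI / 2 ->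
  Rabs (RInt (fun t => sin (t * mu - th) * sin t / cos t ^ 2) 0 x) <= x / cos x ^ 2.
Proof.
  intros Hx; replace (x / cos x ^ 2) with ((x - 0) * / cos x ^ 2) by (unfold Rdiv; ring).
  apply abs_RInt_le_const; [lra | apply ex_RInt_sin_mul_sin_div_cos2; exact Hx |].
  intros t Ht; assert (0 < cos x) by (apply cos_gt_0; lra).
  pose proof (cos_ge_on x t Hx Ht).
  assert (Rabs (sin (t * mu - th) * sin t) <= 1).
  { rewrite Rabs_mult, <- (Rmult_1_l 1).
    apply Rmult_le_compat; try apply Rabs_pos; apply Rabs_le, SIN_bound. }
  unfold Rdiv; rewrite Rabs_mult, Rabs_inv, (Rabs_pos_eq (cos t ^ 2)) by nra.
  rewrite <- (Rmult_1_l (/ cos x ^ 2)).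
  apply Rmult_le_compat; try apply Rabs_pos; [apply Rlt_le, Rinv_0_lt_compat; nra | lra |].
  apply Rinv_le_contravar; [nra | apply pow_incr; lra].
Qed.

(* Integration by parts against [d/dt (sin (t mu - th) / cos t)]. *)
Lemma Eph_by_parts (th x mu : R) : 0 < x < PI / 2 ->
  mu * Eph th x mu
  = sin (x * mu - th) / cos x + sin th - RInt (fun t => sin (t * mu - th) * sin t / cos t ^ 2) 0 x.
Proof.
  intros Hx; assert (0 < cos x) by (apply cos_gt_0; lra).
  set (k := fun t => sin (t * mu - th) * sin t / cos t ^ 2).
  set (g := fun t => mu * (cos (t * mu - th) / cos t) + k t).
  assert (Hsum : is_RInt g 0 x (mu * Eph th x mu + RInt k 0 x)).
  { apply (is_RInt_plus (V := R_NormedModule)).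
    - apply (is_RInt_scal (V := R_NormedModule)), (RInt_correct (V := R_CompleteNormedModule)).
      apply ex_RInt_Eph; exact Hx.
    - apply (RInt_correct (V := R_CompleteNormedModule)), ex_RInt_sin_mul_sin_div_cos2; exact Hx. }
  assert (Hftc : is_RInt g 0 x (sin (x * mu - th) / cos x + sin th)).
  { replace (sin (x * mu - th) / cos x + sin th)
      with (minus (sin (x * mu - th) / cos x) (sin (0 * mu - th) / cos 0))
      by (unfold minus, plus, opp; simpl; rewrite cos_0; replace (0 * mu - th) with (- th) by ring;
          rewrite sin_neg; field; lra).
    apply (is_RInt_derive (V := R_CompleteNormedModule) (fun t => sin (t * mu - th) / cos t));
      intros t Ht; rewrite Rmin_left, Rmax_right in Ht by lra.
    all: assert (0 < cos t) by (apply cos_gt_0; lra).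
    - auto_derive; [lra | unfold g, k, Rminus; field; lra].
    - apply (ex_derive_continuous (V := R_NormedModule)); unfold g, k; auto_derive; nra. }
  rewrite <- (is_RInt_unique (V := R_CompleteNormedModule) _ _ _ _ Hftc),
          (is_RInt_unique (V := R_CompleteNormedModule) _ _ _ _ Hsum); ring.
Qed.

Lemma Eph_decay (th x mu : R) : 0 < x < PI / 2 ->
  Rabs (mu * Eph th x mu) <= 1 + 1 / cos x + x / cos x ^ 2.
Proof.
  intros Hx; assert (Hcx : 0 < cos x) by (apply cos_gt_0; lra).
  rewrite Eph_by_parts by exact Hx.
  pose proof (Rabs_RInt_sin_mul_sin_div_cos2_le th x mu Hx).
  assert (Rabs (sin (x * mu - th) / cos x) <= 1 / cos x).
  { unfold Rdiv; rewrite Rabs_mult, Rabs_inv, (Rabs_pos_eq (cos x)) by lra.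
    apply Rmult_le_compat_r; [apply Rlt_le, Rinv_0_lt_compat; lra | apply Rabs_le, SIN_bound]. }
  assert (Rabs (sin th) <= 1) by apply Rabs_le, SIN_bound.
  pose proof (Rabs_triang (sin (x * mu - th) / cos x + sin th)
                (- RInt (fun t => sin (t * mu - th) * sin t / cos t ^ 2) 0 x)).
  pose proof (Rabs_triang (sin (x * mu - th) / cos x) (sin th)).
  rewrite Rabs_Ropp in *; unfold Rminus at 1; lra.
Qed.

Lemma is_lim_seq_arith (c d : R) : 0 < c -> is_lim_seq (fun n => c * INR n + d) p_infty.
Proof.
  intros Hc; eapply is_lim_seq_plus;
    [apply is_lim_seq_scal_l with (a := c), is_lim_seq_INR | apply is_lim_seq_const |].
  simpl; destruct (Rle_dec 0 c) as [Hc' |]; [| lra].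
  destruct (Rle_lt_or_eq_dec 0 c Hc'); [constructor | lra].
Qed.

Lemma is_lim_seq_inv_arith (c d : R) : 0 < c -> is_lim_seq (fun n => / (c * INR n + d)) 0.
Proof.
  intros Hc; replace (Finite 0) with (Rbar_inv p_infty) by reflexivity.
  apply is_lim_seq_inv; [apply is_lim_seq_arith; exact Hc | discriminate].
Qed.

Lemma is_lim_seq_of_decay (g : R -> R) (K lam : R) :
  (forall mu, Rabs (mu * g mu) <= K) -> is_lim_seq (fun n => g (2 * INR n + lam)) 0.
Proof.
  intros Hg; apply is_lim_seq_abs_0.
  apply (is_lim_seq_le_le_loc (fun _ => 0) _ (fun n => K * / (2 * INR n + lam))).
  - generalize (proj2 (is_lim_seq_spec _ _) (is_lim_seq_arith 2 lam ltac:(lra)) 0).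
    apply filter_imp; intros n Hn; split; [apply Rabs_pos |].
    specialize (Hg (2 * INR n + lam)); rewrite Rabs_mult, Rabs_pos_eq in Hg by lra.
    apply (Rmult_le_reg_l (2 * INR n + lam)); [exact Hn |].
    rewrite (Rmult_comm K), <- Rmult_assoc, Rinv_r, Rmult_1_l by lra; exact Hg.
  - apply is_lim_seq_const.
  - replace (Finite 0) with (Rbar_mult K 0) by (simpl; f_equal; ring).
    apply is_lim_seq_scal_l, is_lim_seq_inv_arith; lra.
Qed.

Lemma is_series_alt_telescoping (g h : nat -> R) :
  (forall n, g n + g (S n) = h n) -> is_lim_seq g 0 ->
  is_series (fun n => (-1) ^ n * h n) (g O).
Proof.
  intros Hgh Hg.
  assert (Hpartial : forall N, sum_n (fun n => (-1) ^ n * h n) N = g O - (-1) ^ S N * g (S N)).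
  { induction N as [| N IH]; [rewrite sum_O, <- Hgh; simpl; ring |].
    rewrite sum_Sn, IH, <- Hgh; unfold plus; simpl; ring. }
  change (is_lim_seq (sum_n (fun n => (-1) ^ n * h n)) (g O)).
  apply (is_lim_seq_ext (fun N => g O - (-1) ^ S N * g (S N))); [intros N; symmetry; apply Hpartial |].
  replace (Finite (g O)) with (Finite (g O - 0)) by (f_equal; ring).
  apply is_lim_seq_minus'; [apply is_lim_seq_const |].
  apply is_lim_seq_abs_0, (is_lim_seq_ext (fun N => Rabs (g (S N)))).
  { intros N; rewrite Rabs_mult, pow_1_abs; ring. }
  apply (is_lim_seq_abs_0 (fun N => g (S N))), (is_lim_seq_incr_1 g); exact Hg.
Qed.

(* the paper's [2k - 1 + lam], with [k = n + 1] *)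
Definition odd_shift (lam : R) (n : nat) : R := 2 * INR n + 1 + lam.

Lemma is_series_Eph (th x lam : R) : 0 < x < PI / 2 -> (forall n, odd_shift lam n <> 0) ->
  is_series (fun n => (-1) ^ n * (2 * (sin (odd_shift lam n * x - th) + sin th) / odd_shift lam n))
    (Eph th x lam).
Proof.
  intros Hx Ha.
  replace (Eph th x lam) with (Eph th x (2 * INR 0 + lam)) by (simpl; f_equal; ring).
  apply (is_series_alt_telescoping (fun n => Eph th x (2 * INR n + lam))
           (fun n => 2 * (sin (odd_shift lam n * x - th) + sin th) / odd_shift lam n)).
  - intros n; specialize (Ha n); unfold odd_shift in *; rewrite S_INR.
    replace (2 * (INR n + 1) + lam) with (2 * INR n + lam + 2) by ring.
    replace (2 * INR n + 1 + lam) with (2 * INR n + lam + 1) in * by ring.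
    apply Eph_add_shift2; [exact Hx | exact Ha].
  - apply (is_lim_seq_of_decay (Eph th x) (1 + 1 / cos x + x / cos x ^ 2)).
    intros mu; apply Eph_decay; exact Hx.
Qed.

Lemma is_series_C (u : nat -> C) (a b : R) :
  is_series (fun n => fst (u n)) a -> is_series (fun n => snd (u n)) b ->
  is_series (K := C_AbsRing) (V := C_NormedModule) u (a, b).
Proof.
  intros Ha Hb; unfold is_series in *.
  assert (Hsum : forall N, sum_n u N = (sum_n (fun n => fst (u n)) N, sum_n (fun n => snd (u n)) N)).
  { induction N as [| N IH]; [rewrite !sum_O; now destruct (u O) |].
    rewrite !sum_Sn, IH; reflexivity. }
  eapply filterlim_ext; [intros N; symmetry; apply Hsum |].
  apply filterlim_locally; intros eps.
  generalize (filter_and _ _ (proj1 (filterlim_locally _ _) Ha eps)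
                             (proj1 (filterlim_locally _ _) Hb eps)).
  apply filter_imp; intros N [H1 H2]; split; assumption.
Qed.

(* [Eci_term x lam n = 2 i (-1)^n (1 - e^{i a_n x}) / a_n] *)
Definition Eci_term (x lam : R) (n : nat) : C :=
  (2 * (-1) ^ n * sin (odd_shift lam n * x) / odd_shift lam n,
   2 * (-1) ^ n * (1 - cos (odd_shift lam n * x)) / odd_shift lam n).

Lemma is_series_Eci (x lam : R) : 0 < x < PI / 2 -> (forall n, odd_shift lam n <> 0) ->
  is_series (K := C_AbsRing) (V := C_NormedModule) (Eci_term x lam) (Eci x lam).
Proof.
  intros Hx Ha; rewrite Eci_eq_Eph by exact Hx; apply is_series_C.
  - eapply is_series_ext; [| apply (is_series_Eph 0 x lam Hx Ha)]; intros n; simpl.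
    rewrite Rminus_0_r, sin_0; field; apply Ha.
  - eapply is_series_ext; [| apply (is_series_Eph (PI / 2) x lam Hx Ha)]; intros n; simpl.
    rewrite sin_minus, cos_PI2, sin_PI2; field; apply Ha.
Qed.

Lemma ex_series_alt (u : nat -> R) :
  Un_decreasing u -> is_lim_seq u 0 -> ex_series (fun n => (-1) ^ n * u n).
Proof.
  intros Hdec Hlim.
  destruct (alternated_series u Hdec (proj1 (is_lim_seq_Reals u 0) Hlim)) as [l Hl].
  exists l; apply is_series_Reals; exact Hl.
Qed.

Lemma ex_series_S_term (lam : R) : ex_series (S_term lam).
Proof.
  destruct (INR_unbounded (Rabs lam)) as [N0 HN0].
  set (d := 2 * INR N0 + 1 + lam).
  assert (Hd : 0 < d) by (unfold d; pose proof (Rle_abs (- lam)); pose proof (Rabs_pos lam);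
                        rewrite Rabs_Ropp in *; lra).
  (* [lam] may be very negative: the moduli decrease only from index [N0] on *)
  apply (ex_series_incr_n _ N0).
  apply (ex_series_ext (fun k => scal ((-1) ^ N0) ((-1) ^ k * (2 * / (2 * INR k + d))))).
  { intros k; unfold S_term, scal; simpl; unfold mult; simpl.
    rewrite plus_INR, pow_add; unfold d; field; pose proof (pos_INR k); unfold d in Hd; lra. }
  apply (ex_series_scal_l (K := R_AbsRing) (V := R_NormedModule)), ex_series_alt.
  - intros k; rewrite S_INR; pose proof (pos_INR k).
    apply Rmult_le_compat_l, Rinv_le_contravar; lra.
  - replace (Finite 0) with (Rbar_mult 2 0) by (simpl; f_equal; ring).
    apply is_lim_seq_scal_l, is_lim_seq_inv_arith; lra.
Qed.

Lemma cos_sin_sub_odd_PI2 (phi : R) (n : nat) :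
  cos (phi - (2 * INR n + 1) * (PI / 2)) = (-1) ^ n * sin phi /\
  sin (phi - (2 * INR n + 1) * (PI / 2)) = - ((-1) ^ n * cos phi).
Proof.
  induction n as [| n [IHc IHs]].
  - simpl; replace ((2 * 0 + 1) * (PI / 2)) with (PI / 2) by ring.
    rewrite cos_minus, sin_minus, cos_PI2, sin_PI2; split; ring.
  - replace (phi - (2 * INR (S n) + 1) * (PI / 2)) with ((phi - (2 * INR n + 1) * (PI / 2)) - PI)
      by (rewrite S_INR; field).
    rewrite (cos_minus _ PI), (sin_minus _ PI), cos_PI, sin_PI, IHc, IHs; simpl; split; ring.
Qed.

Lemma L_term_S_term_eq (x lam : R) (n : nat) : odd_shift lam n <> 0 ->
  (cexp (Ci * RtoC (x * lam)) * L_term (x - PI / 2) lam n + Ci * RtoC (S_term lam n))%C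
  = Eci_term x lam n.
Proof.
  intros Ha; unfold L_term, S_term, Eci_term; fold (odd_shift lam n) in *; rewrite !cexp_Ci_mult.
  replace ((2 * INR n + 1) * (x - PI / 2))
    with ((2 * INR n + 1) * x - (2 * INR n + 1) * (PI / 2)) by ring.
  destruct (cos_sin_sub_odd_PI2 ((2 * INR n + 1) * x) n) as [-> ->].
  replace (odd_shift lam n * x) with ((2 * INR n + 1) * x + x * lam) by (unfold odd_shift; ring).
  rewrite sin_plus, cos_plus.
  unfold Cdiv, Cinv, Cmult, Cplus, Ci, RtoC; simpl; f_equal; field; exact Ha.
Qed.

Lemma is_series_Ci_RtoC (a : nat -> R) (l : R) : is_series a l ->
  is_series (K := C_AbsRing) (V := C_NormedModule) (fun n => Ci * RtoC (a n))%C (Ci * RtoC l)%C.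
Proof.
  intros Ha; replace (Ci * RtoC l)%C with ((0 * l)%R, l) by (unfold Ci, RtoC, Cmult; simpl; f_equal; ring).
  apply is_series_C.
  - eapply is_series_ext; [| apply (is_series_scal_l (K := R_AbsRing) 0 a l Ha)].
    intros n; unfold scal; simpl; unfold mult; simpl; ring.
  - eapply is_series_ext; [| exact Ha]; intros n; simpl; ring.
Qed.

Lemma Eci_eq_L_S (x lam : R) : 0 < x < PI / 2 ->
  (forall n : nat, 2 * INR n + 1 + lam <> 0) ->
  exists (v : C) (s : R),
    is_Lval (x - PI / 2) lam v /\ is_Sval lam s /\
    Eci x lam = (cexp (Ci * RtoC (x * lam)) * v + Ci * RtoC s)%C.
Proof.
  intros Hx Ha; destruct (ex_series_S_term lam) as [s Hs].
  set (c := cexp (Ci * RtoC (x * lam))); assert (Hc : c <> 0%C) by apply cexp_neq_0.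
  exists (/ c * (Eci x lam - Ci * RtoC s))%C, s.
  split; [| split; [exact Hs | field; exact Hc]].
  pose proof (is_series_minus _ _ _ _ (is_series_Eci x lam Hx Ha) (is_series_Ci_RtoC _ _ Hs)) as Hd.
  apply (is_series_scal_l (/ c)%C) in Hd.
  eapply is_series_ext; [| exact Hd].
  intros n; change (/ c * (Eci_term x lam n - Ci * RtoC (S_term lam n))
                    = L_term (x - PI / 2) lam n)%C.
  rewrite <- (L_term_S_term_eq x lam n (Ha n)); fold c.
  field; exact Hc.
Qed.

(** * The Laplace representation *)

Definition ecis (a u s : R) : C := cexp ((- (a * u))%R, (a * s)%R).

Lemma ecis_add (a b u s : R) : ecis (a + b) u s = (ecis a u s * ecis b u s)%C.
Proof. unfold ecis; rewrite <- cexp_add; f_equal; unfold Cplus; simpl; f_equal; ring. Qed.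

Lemma Cmod_ecis (a u s : R) : Cmod (ecis a u s) = exp (- (a * u)).
Proof. apply Cmod_cexp. Qed.

(* [ecis_sech (lam + 1) u s = e^{-lam (u - i s)} / (2 cosh (u - i s))] *)
Definition ecis_sech (a u s : R) : C := (ecis a u s / (1 + ecis 2 u s))%C.

Lemma exp_cexp_div_ccosh (lam u s : R) : (1 + ecis 2 u s)%C <> 0%C ->
  (RtoC (exp (- lam * u)) * (cexp (Ci * RtoC (lam * s)) / ccosh (RtoC u - Ci * RtoC s)))%C
  = (2 * ecis_sech (lam + 1) u s)%C.
Proof.
  intros Hq; unfold ecis_sech, ccosh.
  assert (Hinv : (cexp (RtoC u - Ci * RtoC s) * ecis 1 u s)%C = 1%C).
  { unfold ecis; rewrite <- cexp_add.
    replace (RtoC u - Ci * RtoC s + ((- (1 * u))%R, (1 * s)%R))%C with (RtoC 0)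
      by (unfold Cminus, Cplus, Copp, Cmult, Ci, RtoC; simpl; f_equal; ring).
    unfold cexp, RtoC; simpl; rewrite exp_0, cos_0, sin_0; unfold Cmult; simpl; f_equal; ring. }
  assert (Hlam : (RtoC (exp (- lam * u)) * cexp (Ci * RtoC (lam * s)))%C = ecis lam u s).
  { unfold ecis, cexp, Cmult, Ci, RtoC; simpl.
    replace (0 * (lam * s) - 1 * 0) with 0 by ring; replace (0 * 0 + 1 * (lam * s)) with (lam * s) by ring.
    rewrite exp_0; replace (- lam * u) with (- (lam * u)) by ring; f_equal; ring. }
  assert (Hneg : cexp (- (RtoC u - Ci * RtoC s)) = ecis 1 u s).
  { unfold ecis; f_equal; unfold Cminus, Cplus, Copp, Cmult, Ci, RtoC; simpl; f_equal; ring. }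
  rewrite Hneg, !ecis_add.
  replace (ecis 2 u s) with (ecis 1 u s * ecis 1 u s)%C in *
    by (replace 2 with (1 + 1) by ring; symmetry; apply ecis_add).
  assert (He : ecis 1 u s <> 0%C) by apply cexp_neq_0.
  rewrite <- Hlam.
  replace (cexp (RtoC u - Ci * RtoC s)) with (/ ecis 1 u s)%C
    by (rewrite <- (Cmult_1_l (/ _)%C), <- Hinv; field; exact He).
  field; split; [exact Hq | exact He].
Qed.

Lemma alt_geometric_sum (p : nat -> C) (q : C) (N : nat) :
  (1 + q)%C <> 0%C -> (forall n, p (S n) = - (p n * q))%C ->
  (p O / (1 + q))%C = (sum_n p N + p (S N) / (1 + q))%C.
Proof.
  intros Hq Hp; induction N as [| N IH].
  - rewrite sum_O, Hp; field; exact Hq.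
  - rewrite IH, sum_Sn, (Hp (S N)); change (plus ?a ?b) with (Cplus a b); field; exact Hq.
Qed.

Lemma ecis_sech_expansion (lam u s : R) (N : nat) : (1 + ecis 2 u s)%C <> 0%C ->
  ecis_sech (lam + 1) u s
  = (sum_n (fun n => RtoC ((-1) ^ n) * ecis (odd_shift lam n) u s) N
     + RtoC ((-1) ^ S N) * ecis_sech (odd_shift lam (S N)) u s)%C.
Proof.
  intros Hq; set (p := fun n => (RtoC ((-1) ^ n) * ecis (odd_shift lam n) u s)%C).
  assert (Hp0 : ecis (lam + 1) u s = p O).
  { unfold p; simpl pow; rewrite Cmult_1_l; f_equal; unfold odd_shift; simpl; ring. }
  assert (Hp : forall n, (p (S n) = - (p n * ecis 2 u s))%C).
  { intros n; unfold p, odd_shift; rewrite S_INR.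
    replace (2 * (INR n + 1) + 1 + lam) with (2 * INR n + 1 + lam + 2) by ring.
    replace (RtoC ((-1) ^ S n)) with (- RtoC ((-1) ^ n))%C by (unfold RtoC, Copp; simpl; f_equal; ring).
    rewrite ecis_add; ring. }
  unfold ecis_sech; rewrite Hp0, (alt_geometric_sum p _ N Hq Hp).
  unfold p at 2, Cdiv; ring.
Qed.

Lemma Cmod_1_plus_ecis_ge (u s : R) : Rabs (sin (2 * s)) <= Cmod (1 + ecis 2 u s).
Proof.
  unfold Cmod, ecis, cexp, Cplus, Cmult, RtoC; simpl.
  rewrite <- sqrt_Rsqr_abs; apply sqrt_le_1_alt; unfold Rsqr.
  (* |1 + r e^{i t}|^2 = sin t ^ 2 + (cos t + r) ^ 2 *)
  pose proof (sin2_cos2 (2 * s)); unfold Rsqr in *.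
  set (r := exp (- (2 * u))); set (c := cos (2 * s)) in *; set (t := sin (2 * s)) in *.
  assert (r * r * (t * t + c * c) = r * r) by (rewrite H; ring).
  pose proof (Rle_0_sqr (c + r)); unfold Rsqr in *; nra.
Qed.

Lemma one_le_Cmod_1_plus_ecis (u : R) : 1 <= Cmod (1 + ecis 2 u 0).
Proof.
  unfold Cmod, ecis, cexp, Cplus, Cmult, RtoC; simpl.
  rewrite Rmult_0_r, cos_0, sin_0; apply (Rle_trans _ (sqrt 1)); [rewrite sqrt_1; lra |].
  apply sqrt_le_1_alt; pose proof (exp_pos (- (2 * u))); nra.
Qed.

Lemma sin_le_Cmod_1_plus_ecis (y u s : R) : 0 < y < PI / 2 -> s = 0 \/ s = y ->
  0 < sin (2 * y) <= Cmod (1 + ecis 2 u s).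
Proof.
  intros Hy Hs; assert (Hsin : 0 < sin (2 * y)) by (apply sin_gt_0; lra).
  split; [exact Hsin |]; destruct Hs as [-> | ->].
  - pose proof (SIN_bound (2 * y)); pose proof (one_le_Cmod_1_plus_ecis u); lra.
  - pose proof (Cmod_1_plus_ecis_ge u y); rewrite Rabs_pos_eq in * by lra; assumption.
Qed.

Lemma one_plus_ecis_neq_0 (y u s : R) : 0 < y < PI / 2 -> s = 0 \/ s = y -> (1 + ecis 2 u s)%C <> 0%C.
Proof.
  intros Hy Hs E; pose proof (sin_le_Cmod_1_plus_ecis y u s Hy Hs); rewrite E, Cmod_0 in *; lra.
Qed.

Definition Eci_integrand (lam y u : R) : C :=
  (Ci * (RtoC (exp (- lam * u)) *
     (RtoC (/ cosh u) - cexp (Ci * RtoC (lam * y)) / ccosh (RtoC u - Ci * RtoC y))))%C.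

Definition Eci_rem (lam y u : R) (N : nat) : C :=
  (Ci * RtoC (2 * (-1) ^ S N) *
     (ecis_sech (odd_shift lam (S N)) u 0 - ecis_sech (odd_shift lam (S N)) u y))%C.

Lemma sum_n_Cmult_minus (c : C) (v w : nat -> C) (N : nat) :
  (c * (sum_n v N - sum_n w N))%C = sum_n (fun n => c * (v n - w n))%C N.
Proof.
  induction N as [| N IH]; [rewrite !sum_O; reflexivity |].
  rewrite !sum_Sn, <- IH; change (plus ?a ?b) with (Cplus a b); ring.
Qed.

Lemma Eci_term_laplace (y lam u : R) (n : nat) : odd_shift lam n <> 0 ->
  (Ci * RtoC 2 * (RtoC ((-1) ^ n) * ecis (odd_shift lam n) u 0
                  - RtoC ((-1) ^ n) * ecis (odd_shift lam n) u y))%C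
  = (RtoC (odd_shift lam n * exp (- (odd_shift lam n * u))) * Eci_term y lam n)%C.
Proof.
  intros Ha; unfold ecis, cexp, Eci_term, Cminus, Cplus, Copp, Cmult, Ci, RtoC; simpl.
  rewrite !Rmult_0_r, cos_0, sin_0; f_equal; field; exact Ha.
Qed.

Lemma Eci_integrand_expansion (lam y u : R) (N : nat) : 0 < y < PI / 2 ->
  (forall n, odd_shift lam n <> 0) ->
  Eci_integrand lam y u
  = (sum_n (fun n => RtoC (odd_shift lam n * exp (- (odd_shift lam n * u))) * Eci_term y lam n) N
     + Eci_rem lam y u N)%C.
Proof.
  intros Hy Ha.
  assert (H0 : (1 + ecis 2 u 0)%C <> 0%C) by (apply (one_plus_ecis_neq_0 y); tauto).
  assert (Hy' : (1 + ecis 2 u y)%C <> 0%C) by (apply (one_plus_ecis_neq_0 y); tauto).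
  assert (Hcosh : RtoC (/ cosh u) = (cexp (Ci * RtoC (lam * 0)) / ccosh (RtoC u - Ci * RtoC 0))%C).
  { rewrite Rmult_0_r, cexp_Ci_mult, cos_0, sin_0.
    replace (RtoC u - Ci * RtoC 0)%C with (RtoC u)
      by (unfold Cminus, Cplus, Copp, Cmult, Ci, RtoC; simpl; f_equal; ring).
    rewrite ccosh_RtoC; unfold Cdiv; rewrite <- RtoC_inv, Cmult_1_l; [reflexivity |].
    unfold cosh; pose proof (exp_pos u); pose proof (exp_pos (- u)); lra. }
  transitivity (Ci * RtoC 2 * (ecis_sech (lam + 1) u 0 - ecis_sech (lam + 1) u y))%C.
  { unfold Eci_integrand; rewrite Hcosh.
    match goal with |- (Ci * (?e * (?a - ?b)))%C = _ => transitivity (Ci * (e * a - e * b))%C end;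
      [ring |].
    rewrite (exp_cexp_div_ccosh lam u 0 H0), (exp_cexp_div_ccosh lam u y Hy'); ring. }
  rewrite (ecis_sech_expansion lam u 0 N H0), (ecis_sech_expansion lam u y N Hy').
  rewrite <- (sum_n_ext _ _ N (fun n => Eci_term_laplace y lam u n (Ha n))).
  rewrite <- sum_n_Cmult_minus; unfold Eci_rem; rewrite RtoC_mult; ring.
Qed.

Lemma continuous_C (h : R -> C) (x : R) :
  continuous (fun u => fst (h u)) x -> continuous (fun u => snd (h u)) x ->
  continuous (U := C_UniformSpace) h x.
Proof.
  intros H1 H2; apply filterlim_locally; intros eps.
  generalize (filter_and _ _ (proj1 (filterlim_locally _ _) H1 eps)
                             (proj1 (filterlim_locally _ _) H2 eps)).
  apply filter_imp; intros u [Hu1 Hu2]; split; assumption.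
Qed.

Lemma Cmod_pos_sum_sqr (z : C) : 0 < Cmod z -> fst z ^ 2 + snd z ^ 2 <> 0.
Proof. intros Hz E; unfold Cmod in Hz; rewrite E, sqrt_0 in Hz; lra. Qed.

Lemma continuous_Eci_rem (lam y : R) (N : nat) (x : R) : 0 < y < PI / 2 ->
  continuous (U := C_UniformSpace) (fun u => Eci_rem lam y u N) x.
Proof.
  intros Hy.
  assert (D : forall s, s = 0 \/ s = y -> fst (1 + ecis 2 x s)%C ^ 2 + snd (1 + ecis 2 x s)%C ^ 2 <> 0).
  { intros s Hs; apply Cmod_pos_sum_sqr; pose proof (sin_le_Cmod_1_plus_ecis y x s Hy Hs); lra. }
  pose proof (D 0 (or_introl eq_refl)) as D0; pose proof (D y (or_intror eq_refl)) as Dy; clear D.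
  apply continuous_C; unfold Eci_rem, ecis_sech, ecis, cexp, Cdiv, Cinv, Cmult, Cminus, Cplus, Copp, Ci, RtoC in *;
    simpl in *; apply (ex_derive_continuous (V := R_NormedModule)); auto_derive;
    unfold Rminus in *; repeat split; assumption.
Qed.

Lemma norm_C_R (z : C) : norm (K := R_AbsRing) (V := C_R_NormedModule) z = Cmod z.
Proof.
  destruct z as [a b]; unfold norm; simpl; unfold prod_norm, Cmod; simpl.
  unfold norm; simpl; unfold abs; simpl.
  rewrite !Rmult_1_r, <- !Rabs_mult, !Rabs_pos_eq by nra; reflexivity.
Qed.

Lemma Cmod_ecis_sech_le (a y u s : R) : 0 < y < PI / 2 -> s = 0 \/ s = y ->
  Cmod (ecis_sech a u s) <= exp (- (a * u)) / sin (2 * y).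
Proof.
  intros Hy Hs; pose proof (sin_le_Cmod_1_plus_ecis y u s Hy Hs) as [Hsin Hle].
  unfold ecis_sech; rewrite Cmod_div, Cmod_ecis by (apply (one_plus_ecis_neq_0 y); assumption).
  unfold Rdiv; apply Rmult_le_compat_l; [apply Rlt_le, exp_pos |].
  apply Rinv_le_contravar; assumption.
Qed.

Lemma Cmod_Eci_rem_le (lam y u : R) (N : nat) : 0 < y < PI / 2 ->
  Cmod (Eci_rem lam y u N) <= 4 / sin (2 * y) * exp (- (odd_shift lam (S N) * u)).
Proof.
  intros Hy; unfold Eci_rem.
  rewrite !Cmod_mult, Cmod_Ci, Cmod_R, Rabs_mult, pow_1_abs, Rabs_pos_eq by lra.
  pose proof (Cmod_ecis_sech_le (odd_shift lam (S N)) y u 0 Hy (or_introl eq_refl)).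
  pose proof (Cmod_ecis_sech_le (odd_shift lam (S N)) y u y Hy (or_intror eq_refl)).
  pose proof (Cmod_triangle (ecis_sech (odd_shift lam (S N)) u 0) (- ecis_sech (odd_shift lam (S N)) u y)).
  rewrite Cmod_opp in *; unfold Cminus; unfold Rdiv in *; lra.
Qed.

Lemma is_RInt_exp_decay (a b c : R) : a <> 0 ->
  is_RInt (fun u => c * (a * exp (- (a * u)))) 0 b (c * (1 - exp (- (a * b)))).
Proof.
  intros Ha.
  replace (c * (1 - exp (- (a * b))))
    with (minus (- c * exp (- (a * b))) (- c * exp (- (a * 0))))
    by (unfold minus, plus, opp; simpl; rewrite Rmult_0_r, Ropp_0, exp_0; ring).
  apply (is_RInt_derive (V := R_CompleteNormedModule) (fun u => - c * exp (- (a * u)))); intros u _.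
  - auto_derive; [exact I | ring].
  - apply (ex_derive_continuous (V := R_NormedModule)); auto_derive; exact I.
Qed.

Lemma is_RInt_laplace_term (a b : R) (v : C) : a <> 0 ->
  is_RInt (V := C_R_NormedModule) (fun u => RtoC (a * exp (- (a * u))) * v)%C 0 b
    (RtoC (1 - exp (- (a * b))) * v)%C.
Proof.
  intros Ha; destruct v as [v1 v2].
  replace (RtoC (1 - exp (- (a * b))) * (v1, v2))%C
    with ((v1 * (1 - exp (- (a * b))))%R, (v2 * (1 - exp (- (a * b))))%R)
    by (unfold RtoC, Cmult; simpl; f_equal; ring).
  apply (is_RInt_ext (V := C_R_NormedModule)
           (fun u => ((v1 * (a * exp (- (a * u))))%R, (v2 * (a * exp (- (a * u))))%R))).
  { intros u _; unfold RtoC, Cmult; simpl; f_equal; ring. }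
  apply (is_RInt_fct_extend_pair (U := R_NormedModule) (V := R_NormedModule));
    apply is_RInt_exp_decay; exact Ha.
Qed.

Lemma is_RInt_sum_n {V : NormedModule R_AbsRing} (f : nat -> R -> V) (I : nat -> V) (a b : R) (N : nat) :
  (forall n, is_RInt (f n) a b (I n)) ->
  is_RInt (fun u => sum_n (fun n => f n u) N) a b (sum_n I N).
Proof.
  intros Hf; induction N as [| N IH].
  - rewrite sum_O; apply (is_RInt_ext (f O)); [intros u _; rewrite sum_O; reflexivity | apply Hf].
  - rewrite sum_Sn; apply (is_RInt_ext (fun u => plus (sum_n (fun n => f n u) N) (f (S N) u))).
    + intros u _; rewrite sum_Sn; reflexivity.
    + apply is_RInt_plus; [exact IH | apply Hf].
Qed.

Lemma is_RInt_Eci_integrand (lam y b : R) (N : nat) : 0 < y < PI / 2 ->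
  (forall n, odd_shift lam n <> 0) ->
  is_RInt (V := C_R_NormedModule) (Eci_integrand lam y) 0 b
    (sum_n (fun n => RtoC (1 - exp (- (odd_shift lam n * b))) * Eci_term y lam n)%C N
     + RInt (V := C_R_CompleteNormedModule) (fun u => Eci_rem lam y u N) 0 b)%C.
Proof.
  intros Hy Ha.
  apply (is_RInt_ext (V := C_R_NormedModule) (fun u =>
    (sum_n (fun n => RtoC (odd_shift lam n * exp (- (odd_shift lam n * u))) * Eci_term y lam n) N
     + Eci_rem lam y u N)%C)).
  { intros u _; symmetry; apply Eci_integrand_expansion; assumption. }
  apply (is_RInt_plus (V := C_R_NormedModule)).
  - exact (is_RInt_sum_n (V := C_R_NormedModule) _ _ 0 b N
             (fun n => is_RInt_laplace_term _ b (Eci_term y lam n) (Ha n))).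
  - apply (RInt_correct (V := C_R_CompleteNormedModule)), (ex_RInt_continuous (V := C_R_CompleteNormedModule)).
    intros u _; apply continuous_Eci_rem; exact Hy.
Qed.

Lemma Cmod_RInt_Eci_rem_le (lam y b : R) (N : nat) : 0 < y < PI / 2 -> 0 <= b ->
  0 < odd_shift lam (S N) ->
  Cmod (RInt (V := C_R_CompleteNormedModule) (fun u => Eci_rem lam y u N) 0 b)
  <= 4 / sin (2 * y) / odd_shift lam (S N).
Proof.
  intros Hy Hb Ha; set (a := odd_shift lam (S N)) in *; set (K := 4 / sin (2 * y)).
  assert (HK : 0 < K) by (apply Rdiv_lt_0_compat; [lra | apply sin_gt_0; lra]).
  rewrite <- norm_C_R.
  apply (Rle_trans _ (K * (1 - exp (- (a * b))) / a)).
  - apply (norm_RInt_le (V := C_R_NormedModule) (fun u => Eci_rem lam y u N)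
             (fun u => K * (a * exp (- (a * u))) / a) 0 b).
    + exact Hb.
    + intros u _; rewrite norm_C_R.
      replace (K * (a * exp (- (a * u))) / a) with (K * exp (- (a * u))) by (field; lra).
      apply Cmod_Eci_rem_le; exact Hy.
    + apply (RInt_correct (V := C_R_CompleteNormedModule)), (ex_RInt_continuous (V := C_R_CompleteNormedModule)).
      intros u _; apply continuous_Eci_rem; exact Hy.
    + apply (is_RInt_ext (V := R_NormedModule) (fun u => / a * (K * (a * exp (- (a * u)))))).
      { intros u _; unfold Rdiv; apply Rmult_comm. }
      replace (K * (1 - exp (- (a * b))) / a) with (/ a * (K * (1 - exp (- (a * b))))) by (unfold Rdiv; ring).
      apply (is_RInt_scal (V := R_NormedModule)), is_RInt_exp_decay; lra.
  - pose proof (exp_pos (- (a * b))); unfold Rdiv; apply Rmult_le_compat_r; [apply Rlt_le, Rinv_0_lt_compat; lra | nra].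
Qed.

Lemma Cmod_sum_n_exp_le (E : nat -> C) (a : nat -> R) (c b : R) (N : nat) : 0 <= b ->
  (forall n, c <= a n) ->
  Cmod (sum_n (fun n => RtoC (exp (- (a n * b))) * E n)%C N)
  <= sum_n (fun n => Cmod (E n)) N * exp (- (c * b)).
Proof.
  intros Hb Ha.
  assert (Hterm : forall n, Cmod (RtoC (exp (- (a n * b))) * E n) <= Cmod (E n) * exp (- (c * b))).
  { intros n; rewrite Cmod_mult, Cmod_R, Rabs_pos_eq, Rmult_comm by apply Rlt_le, exp_pos.
    apply Rmult_le_compat_l; [apply Cmod_ge_0 |].
    destruct (Req_dec (a n * b) (c * b)) as [-> | Hne]; [lra |].
    apply Rlt_le, exp_increasing; specialize (Ha n); nra. }
  induction N as [| N IH]; [rewrite !sum_O; apply Hterm |].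
  rewrite !sum_Sn; change (plus ?x ?y) with (Cplus x y) at 1; unfold plus; simpl.
  eapply Rle_trans; [apply Cmod_triangle |]; specialize (Hterm (S N)); lra.
Qed.

Lemma is_lim_seq_Cmod_series (u : nat -> C) (l : C) :
  is_series (K := C_AbsRing) (V := C_NormedModule) u l ->
  is_lim_seq (fun N => Cmod (sum_n u N - l)) 0.
Proof.
  intros Hu; apply is_lim_seq_spec; intros eps.
  generalize (proj1 (filterlim_locally_ball_norm _ _) Hu eps); apply filter_imp; intros N HN.
  rewrite Rminus_0_r, Rabs_pos_eq by apply Cmod_ge_0; exact HN.
Qed.

Lemma exp_neg_le_inv (t : R) : 0 < t -> exp (- t) <= / t.
Proof.
  intros Ht; rewrite exp_Ropp; apply Rinv_le_contravar; [exact Ht |].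
  pose proof (exp_ineq1 t ltac:(lra)); lra.
Qed.

Lemma filterlim_p_infty_of_approx (G : R -> C) (l : C) (err : nat -> R) (c : R) :
  0 < c -> is_lim_seq err 0 ->
  (forall N, exists D, forall b, 0 < b -> Cmod (G b - l) <= err N + D * exp (- (c * b))) ->
  filterlim G (Rbar_locally p_infty) (locally (T := C_UniformSpace) l).
Proof.
  intros Hc Herr Happrox.
  apply (filterlim_locally_ball_norm (K := C_AbsRing) (U := C_NormedModule)); intros eps.
  destruct (proj2 (is_lim_seq_spec _ _) Herr (pos_div_2 eps)) as [N HN].
  specialize (HN N (Nat.le_refl N)); simpl in HN; rewrite Rminus_0_r in HN.
  destruct (Happrox N) as [D HD].
  assert (Heps : 0 < eps) by apply cond_pos.
  exists (Rmax 0 (2 * Rabs D / (c * eps))); intros b Hb.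
  assert (Hb0 : 0 < b) by (pose proof (Rmax_l 0 (2 * Rabs D / (c * eps))); lra).
  assert (Hbig : 2 * Rabs D < b * (c * eps)).
  { assert (Hle : 2 * Rabs D / (c * eps) < b)
      by (pose proof (Rmax_r 0 (2 * Rabs D / (c * eps))); lra).
    apply (Rmult_lt_compat_r (c * eps)) in Hle; [| nra].
    replace (2 * Rabs D / (c * eps) * (c * eps)) with (2 * Rabs D) in Hle by (field; nra).
    exact Hle. }
  assert (Htail : D * exp (- (c * b)) < eps / 2).
  { pose proof (exp_neg_le_inv (c * b) ltac:(nra)); pose proof (exp_pos (- (c * b))).
    pose proof (Rle_abs D); pose proof (Rabs_pos D).
    apply (Rle_lt_trans _ (Rabs D * / (c * b))).
    { apply (Rle_trans _ (Rabs D * exp (- (c * b)))); [apply Rmult_le_compat_r; lra |].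
      apply Rmult_le_compat_l; lra. }
    apply (Rmult_lt_reg_r (c * b)); [nra |].
    rewrite Rmult_assoc, Rinv_l by nra; nra. }
  change (Cmod (G b - l) < eps).
  specialize (HD b Hb0); pose proof (Rle_abs (err N)); lra.
Qed.

Lemma is_RInt_gen_of_lim {V : CompleteNormedModule R_AbsRing} (f : R -> V) (a : R) (l : V) :
  (forall b, a < b -> ex_RInt f a b) ->
  filterlim (fun b => RInt f a b) (Rbar_locally p_infty) (locally l) ->
  is_RInt_gen f (at_point a) (Rbar_locally p_infty) l.
Proof.
  intros Hex Hlim; unfold is_RInt_gen.
  apply (filterlimi_lim_ext_loc (fun ab => RInt f (fst ab) (snd ab))).
  - exists (fun x => x = a) (fun b => a < b); [reflexivity | exists a; tauto |].
    intros x b -> Hb; apply RInt_correct, Hex, Hb.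
  - apply (filterlim_ext_loc (fun ab => RInt f a (snd ab))).
    + exists (fun x => x = a) (fun _ => True); [reflexivity | exists 0; tauto |].
      intros x b -> _; reflexivity.
    + eapply filterlim_comp; [apply filterlim_snd | exact Hlim].
Qed.

Lemma sum_n_one_minus_mult (e : nat -> R) (E : nat -> C) (N : nat) :
  sum_n (fun n => RtoC (1 - e n) * E n)%C N
  = (sum_n E N - sum_n (fun n => RtoC (e n) * E n) N)%C.
Proof.
  rewrite <- (Cmult_1_l (_ - _)), sum_n_Cmult_minus.
  apply sum_n_ext; intros n; simpl; rewrite RtoC_minus; ring.
Qed.

Lemma Cmod_RInt_Eci_integrand_sub_le (lam y b : R) (N : nat) : 0 < y < PI / 2 -> -1 < lam ->
  0 < b ->
  Cmod (RInt (V := C_R_CompleteNormedModule) (Eci_integrand lam y) 0 b - Eci y lam)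
  <= Cmod (sum_n (Eci_term y lam) N - Eci y lam) + 4 / sin (2 * y) / odd_shift lam (S N)
     + sum_n (fun n => Cmod (Eci_term y lam n)) N * exp (- ((1 + lam) * b)).
Proof.
  intros Hy Hlam Hb.
  assert (Hge : forall n, 1 + lam <= odd_shift lam n)
    by (intros n; unfold odd_shift; pose proof (pos_INR n); lra).
  assert (Ha : forall n, odd_shift lam n <> 0) by (intros n; specialize (Hge n); lra).
  rewrite (is_RInt_unique (V := C_R_CompleteNormedModule) _ _ _ _
             (is_RInt_Eci_integrand lam y b N Hy Ha)).
  set (E := Eci_term y lam).
  set (Rem := RInt (V := C_R_CompleteNormedModule) (fun u => Eci_rem lam y u N) 0 b).
  pose proof (sum_n_one_minus_mult (fun n => exp (- (odd_shift lam n * b))) E N) as Hsplit.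
  cbv beta in Hsplit; rewrite Hsplit.
  set (T := sum_n (fun n => RtoC (exp (- (odd_shift lam n * b))) * E n)%C N).
  assert (HT : Cmod T <= sum_n (fun n => Cmod (E n)) N * exp (- ((1 + lam) * b)))
    by (apply Cmod_sum_n_exp_le; [lra | exact Hge]).
  assert (HRem : Cmod Rem <= 4 / sin (2 * y) / odd_shift lam (S N))
    by (apply Cmod_RInt_Eci_rem_le; [exact Hy | lra | specialize (Hge (S N)); lra]).
  pose proof (Cmod_triangle (sum_n E N - Eci y lam) (- T)) as Htri1.
  pose proof (Cmod_triangle (sum_n E N - Eci y lam - T) Rem) as Htri2.
  rewrite Cmod_opp in Htri1.
  replace (sum_n E N - T + Rem - Eci y lam)%C with (sum_n E N - Eci y lam - T + Rem)%C by ring.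
  unfold Cminus in *; lra.
Qed.

Lemma is_RInt_gen_Eci_integrand (y lam : R) : 0 < y < PI / 2 -> -1 < lam ->
  is_RInt_gen (V := C_R_CompleteNormedModule) (Eci_integrand lam y)
    (at_point 0) (Rbar_locally p_infty) (Eci y lam).
Proof.
  intros Hy Hlam.
  assert (Ha : forall n, odd_shift lam n <> 0)
    by (intros n; unfold odd_shift; pose proof (pos_INR n); lra).
  set (K := 4 / sin (2 * y)).
  apply is_RInt_gen_of_lim.
  { intros b _; eexists; apply (is_RInt_Eci_integrand lam y b O Hy Ha). }
  apply (filterlim_p_infty_of_approx _ _
           (fun N => Cmod (sum_n (Eci_term y lam) N - Eci y lam) + K / odd_shift lam (S N))
           (1 + lam)); [lra | |].
  - replace (Finite 0) with (Finite (0 + K * 0)) by (f_equal; ring).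
    apply is_lim_seq_plus'; [apply is_lim_seq_Cmod_series, is_series_Eci; assumption |].
    apply (is_lim_seq_ext (fun N => K * / (2 * INR N + (3 + lam)))).
    { intros N; unfold odd_shift, Rdiv; rewrite S_INR; do 2 f_equal; ring. }
    change (Finite (K * 0)) with (Rbar_mult K 0).
    apply is_lim_seq_scal_l, is_lim_seq_inv_arith; lra.
  - intros N; exists (sum_n (fun n => Cmod (Eci_term y lam n)) N); intros b Hb.
    apply Cmod_RInt_Eci_integrand_sub_le; assumption.
Qed.

Theorem proposition8 :
  (forall x lam : R, 0 < x < PI / 2 ->
     (forall n : nat, 2 * INR n + 1 + lam <> 0) ->
     exists (v : C) (s : R),
       is_Lval (x - PI / 2) lam v /\ is_Sval lam s /\
       Eci x lam = (cexp (Ci * RtoC (x * lam)) * v + Ci * RtoC s)%C) /\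
  (forall y lam : R, 0 < y < PI / 2 -> -1 < lam ->
     is_RInt_gen (V := C_R_CompleteNormedModule)
       (fun u : R => (Ci * (RtoC (exp (- lam * u)) *
          (RtoC (/ cosh u) - cexp (Ci * RtoC (lam * y)) / ccosh ((RtoC u) - Ci * RtoC y))))%C)
       (at_point 0) (Rbar_locally p_infty) (Eci y lam)).
Proof.
  split.
  - exact Eci_eq_L_S.
  - exact is_RInt_gen_Eci_integrand.
Qed.
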